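(* Let $p\ge 2$, $\delta_i\ge 0$ and $g_i(t)=\frac1p(|t|-\delta_i)_+^p$ for $t\in\mathbb{R}$. For every $T\ge \delta_i$, \[ g''_{i}(t)\ge (p-1)\,\left(\frac{T-\delta_i}{T}\right)^{p-2}\,\left(T^2+(|t|-T)_+^2\right)^\frac{p-2}{2}\qquad\text{for every } |t|\ge T. \]
   Context: $(\cdot)_+$ denotes the positive part; $g_i''(t)=(p-1)(|t|-\delta_i)_+^{p-2}$ for $|t|>\delta_i$. *)

From mathcomp Require Import all_boot all_order all_algebra.
From mathcomp Require Import all_classical all_reals all_analysis.
Set Implicit Arguments. Unset Strict Implicit. Unset Printing Implicit Defensive.
Import Order.TTheory GRing.Theory Num.Theory.
Local Open Scope ring_scope.

Definition pos_part {R : realType} (x : R) : R := Num.max x 0.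

Definition g {R : realType} (p delta t : R) : R :=
  p^-1 * (pos_part (`|t| - delta)) `^ p.

(* g_i''(t) = (p-1) (|t| - delta)_+^(p-2), as given in the paper's context *)
Definition g'' {R : realType} (p delta t : R) : R :=
  (p - 1) * (pos_part (`|t| - delta)) `^ (p - 2).

From mathcomp Require Import all_boot all_order all_algebra.
From mathcomp Require Import all_classical all_reals all_analysis.
From mathcomp Require Import lra.
Set Implicit Arguments.
Unset Strict Implicit.
Unset Printing Implicit Defensive.
Import Order.TTheory GRing.Theory Num.Theory.
Local Open Scope ring_scope.

(* With s = |t| >= T, the left-hand side is (p - 1) times the (p - 2)-th power of
   ((T - delta) / T) * sqrt (T^2 + (s - T)^2).  Since T (s - T) >= 0, the square
   root is at most T + (s - T) = s, and ((T - delta) / T) * s <= s - delta because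
   delta (s - T) >= 0.  Monotonicity of x |-> x^(p-2) on [0, +oo) concludes. *)

Lemma pos_part_id (R : realType) (x : R) : 0 <= x -> pos_part x = x.
Proof. by move=> x0; apply/max_idPl. Qed.

Lemma sqrt_sqr_add_sqr_le (R : realType) (a b : R) :
  0 <= a -> 0 <= b -> Num.sqrt (a ^+ 2 + b ^+ 2) <= a + b.
Proof.
move=> a0 b0; rewrite -(ger0_norm (addr_ge0 a0 b0)) -sqrtr_sqr.
by rewrite ler_sqrt ?sqr_ge0 //; nra.
Qed.

Lemma powR_half_sqrt (R : realType) (y r : R) :
  0 <= y -> y `^ (r / 2) = Num.sqrt y `^ r.
Proof. by move=> y0; rewrite mulrC powRrM powR12_sqrt. Qed.

(* For T = 0 the ratio is 0 / 0 = 0, so the inequality still holds. *)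
Lemma ratio_mul_le_sub (R : realType) (delta T s : R) :
  0 <= delta -> delta <= T -> T <= s -> (T - delta) / T * s <= s - delta.
Proof.
move=> d0 dT Ts; have [->|T0] := eqVneq T 0.
  by rewrite invr0 mulr0 mul0r subr_ge0; apply: le_trans Ts.
have Tp : 0 < T by rewrite lt_def T0 (le_trans d0 dT).
by rewrite mulrAC ler_pdivrMr //; nra.
Qed.

Theorem lemmaA3 (R : realType) (p delta T : R) :
  2 <= p -> 0 <= delta -> delta <= T ->
  forall t : R, T <= `|t| ->
    (p - 1) * ((T - delta) / T) `^ (p - 2)
      * (T ^+ 2 + (pos_part (`|t| - T)) ^+ 2) `^ ((p - 2) / 2)
    <= g'' p delta t.
Proof.
move=> p2 d0 dT t Tt; rewrite /g''.
have T0 : 0 <= T := le_trans d0 dT.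
have s0 : 0 <= `|t| - T by rewrite subr_ge0.
rewrite !pos_part_id ?subr_ge0 ?(le_trans dT Tt) //.
rewrite -mulrA ler_pM2l ?subr_gt0 ?(lt_le_trans _ p2) ?ltr1n //.
rewrite powR_half_sqrt ?addr_ge0 ?sqr_ge0 // -powRM ?divr_ge0 ?subr_ge0 ?sqrtr_ge0 //.
apply: ge0_ler_powR; rewrite ?nnegrE ?subr_ge0 ?(le_trans dT Tt) //.
  by rewrite mulr_ge0 ?divr_ge0 ?subr_ge0 ?sqrtr_ge0.
apply: le_trans (ratio_mul_le_sub d0 dT Tt).
rewrite ler_wpM2l ?divr_ge0 ?subr_ge0 //.
by rewrite -{2}(subrKC T `|t|) sqrt_sqr_add_sqr_le.
Qed.
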